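(* Let $\varepsilon>0$, $\Omega\subset\mathbb{R}^2$ bounded open, $u\in\mathcal{SF}_\varepsilon(\Omega)$ and $R\in\mathcal{R}_\varepsilon(u)$, and assume $u(\mathcal{L}_\varepsilon(R))$ contains four points. If $i,j\in\mathcal{L}_\varepsilon$ are such that $[i,j]\subset R$ is an edge of $\mathcal{E}_\varepsilon$ and $u(i)\notin\{u(j),-u(j)\}$, then $[i,j]$ is a boundary edge of $R$.
   Context: $\mathcal{L}=\{ae_1+b\hat e_2:a,b\in\mathbb{Z}\}$ with $e_1=(1,0)$, $\hat e_2=\frac12(1,\sqrt3)$, $\mathcal{L}_\varepsilon=\varepsilon\mathcal{L}$, $\mathcal{L}_\varepsilon(R)=\mathcal{L}_\varepsilon\cap R$; $\mathcal{T}_\varepsilon$ is the set of closed triangles with vertices in $\mathcal{L}_\varepsilon$ pairwise at distance $\varepsilon$; $\mathcal{E}_\varepsilon$ the set of segments $[i,j]$, $i,j\in\mathcal{L}_\varepsilon$, $|i-j|=\varepsilon$. $n=(0,0,1)$; $\mathcal{SF}_\varepsilon(\Omega)$ is the set of $u:\mathcal{L}_\varepsilon\to\mathbb{S}^2$ with $u=n$ on $\mathcal{L}_\varepsilon\setminus\Omega$. $\mathcal{N}_\varepsilon(u)=\{[i,j]\in\mathcal{E}_\varepsilon:u(i)=-u(j)\}$, $\mathcal{C}_\varepsilon(u)=\mathcal{E}_\varepsilon\setminus\mathcal{N}_\varepsilon(u)$. Two triangles of $\mathcal{T}_\varepsilon$ are neighbours if their intersection is an edge in $\mathcal{N}_\varepsilon(u)$,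 and connected if joined by a finite chain of consecutive neighbours. $\mathcal{R}_\varepsilon(u)$ is the set of admissible interpolation regions: unions of pairwise connected triangles of $\mathcal{T}_\varepsilon$ that are maximal with respect to inclusion. A boundary edge of $R$ is an edge $[i,j]\in\mathcal{C}_\varepsilon(u)$ which is the common edge of a triangle $T\subseteq R$ and a triangle $T'\in\mathcal{T}_\varepsilon$ with $T'\subseteq\mathbb{R}^2\setminus\mathrm{int}(R)$. *)

From Stdlib Require Import Reals ZArith Relations.
Open Scope R_scope.

Definition Point : Type := (R * R)%type.
Definition Vec3 : Type := (R * R * R)%type.

Definition dist2 (p q : Point) : R :=
  sqrt ((fst p - fst q) ^ 2 + (snd p - snd q) ^ 2).

(* the triangular lattice L_eps = eps * { a e1 + b e2^ : a, b in Z } *)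
Definition in_lattice (eps : R) (p : Point) : Prop :=
  exists a b : Z,
    p = (eps * (IZR a + IZR b / 2), eps * (IZR b * sqrt 3 / 2)).

Definition set_eq (A B : Point -> Prop) : Prop := forall p, A p <-> B p.
Definition subset (A B : Point -> Prop) : Prop := forall p, A p -> B p.
Definition interior (A : Point -> Prop) (p : Point) : Prop :=
  exists r, 0 < r /\ forall q, dist2 p q < r -> A q.
Definition is_open (A : Point -> Prop) : Prop :=
  forall p, A p -> interior A p.
Definition is_bounded (A : Point -> Prop) : Prop :=
  exists M, forall p, A p -> dist2 (0, 0) p <= M.

Definition segment (i j : Point) (p : Point) : Prop :=
  exists t, 0 <= t <= 1 /\
    p = ((1 - t) * fst i + t * fst j, (1 - t) * snd i + t * snd j).
Definition conv3 (a b c : Point) (p : Point) : Prop :=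
  exists s t w, 0 <= s /\ 0 <= t /\ 0 <= w /\ s + t + w = 1 /\
    p = (s * fst a + t * fst b + w * fst c, s * snd a + t * snd b + w * snd c).

Definition is_triangle (eps : R) (T : Point -> Prop) : Prop :=
  exists a b c, in_lattice eps a /\ in_lattice eps b /\ in_lattice eps c /\
    dist2 a b = eps /\ dist2 b c = eps /\ dist2 a c = eps /\ set_eq T (conv3 a b c).

Definition is_edge (eps : R) (E : Point -> Prop) : Prop :=
  exists i j, in_lattice eps i /\ in_lattice eps j /\ dist2 i j = eps /\
    set_eq E (segment i j).

Definition on_sphere (v : Vec3) : Prop :=
  let '(x, y, z) := v in x ^ 2 + y ^ 2 + z ^ 2 = 1.
Definition north : Vec3 := (0, 0, 1).
Definition opp3 (v : Vec3) : Vec3 := let '(x, y, z) := v in (- x, - y, - z).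

(* SF_eps(Omega): u is only relevant on L_eps *)
Definition SF (eps : R) (Omega : Point -> Prop) (u : Point -> Vec3) : Prop :=
  forall i, in_lattice eps i -> on_sphere (u i) /\ (~ Omega i -> u i = north).

Definition in_N (eps : R) (u : Point -> Vec3) (E : Point -> Prop) : Prop :=
  exists i j, in_lattice eps i /\ in_lattice eps j /\ dist2 i j = eps /\
    set_eq E (segment i j) /\ u i = opp3 (u j).
Definition in_C (eps : R) (u : Point -> Vec3) (E : Point -> Prop) : Prop :=
  is_edge eps E /\ ~ in_N eps u E.

Definition neighbours (eps : R) (u : Point -> Vec3) (T T' : Point -> Prop) : Prop :=
  is_triangle eps T /\ is_triangle eps T' /\
  exists E, in_N eps u E /\ set_eq (fun p => T p /\ T' p) E.
Definition tri_connected (eps : R) (u : Point -> Vec3) : (Point -> Prop) -> (Point -> Prop) -> Prop :=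
  clos_refl_trans _ (neighbours eps u).

Definition big_union (S : (Point -> Prop) -> Prop) (p : Point) : Prop :=
  exists T, S T /\ T p.

Definition pairwise_connected_family (eps : R) (u : Point -> Vec3)
  (S : (Point -> Prop) -> Prop) : Prop :=
  (forall T, S T -> is_triangle eps T) /\
  (forall T T', S T -> S T' -> tri_connected eps u T T').

Definition admissible_region (eps : R) (u : Point -> Vec3) (Rg : Point -> Prop) : Prop :=
  exists S, pairwise_connected_family eps u S /\ set_eq Rg (big_union S) /\
    forall S', pairwise_connected_family eps u S' ->
      subset Rg (big_union S') -> subset (big_union S') Rg.

Definition boundary_edge (eps : R) (u : Point -> Vec3) (Rg : Point -> Prop)
  (E : Point -> Prop) : Prop :=
  in_C eps u E /\
  exists T T', is_triangle eps T /\ is_triangle eps T' /\ subset T Rg /\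
    subset T' (fun p => ~ interior Rg p) /\ set_eq (fun p => T p /\ T' p) E.

From Stdlib Require Import Reals ZArith Relations Lra Lia.
From Stdlib Require Import FunctionalExtensionality PropExtensionality Classical.
Open Scope R_scope.

(* In coordinates relative to (e1, ê2) the triangles of T_eps become unit triangles of
   Z^2, and barycentric coordinates with respect to a unit triangle are integers at
   lattice points that change by at most 1 along an edge. This pins down the triangles
   through a given edge or point.

   The midpoint of [i,j] lies in a triangle of the family, hence in one of the two
   triangles T, T' adjacent to [i,j], say T. As u(i) <> ±u(j), [i,j] is not in N_eps(u),
   so it is a boundary edge unless T' also belongs to the family (points of T' near any
   of its points lie in no other triangle). If it did, T would have a neighbour, so an
   antipodal edge, say u(k) = -u(i). The property "having an antipodal edge with values
   ±u(i)" passes to neighbours (the crossing edge shares a vertex with it), hence holds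
   for every triangle of R. Consequently T, T', and a triangle of R containing a lattice
   point whose value is not in {±u(i), u(j)} (one of the four values) each have at most
   one neighbour. Since no triangle has three antipodal edges on S^2, every triangle has
   at most two neighbours, and a component of a graph of maximal degree two contains at
   most two leaves: contradiction. *)

Lemma least_nat (P : nat -> Prop) :
  (exists n, P n) -> exists n, P n /\ forall m, (m < n)%nat -> ~ P m.
Proof.
  intros [n Pn]. induction n as [n IH] using (well_founded_induction lt_wf).
  destruct (classic (exists m, (m < n)%nat /\ P m)) as [(m & Hm & Pm) | Hno].
  - exact (IH m Hm Pm).
  - exists n. split; [exact Pn |]. intros m Hm Pm. apply Hno. eauto.
Qed.

Section DegreeTwoGraphs.
Local Open Scope nat_scope.
Variables (V : Type) (E : V -> V -> Prop).

Definition walk (f : nat -> V) (n : nat) : Prop := forall k, k < n -> E (f k) (f (S k)).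

Lemma walk_of_clos_rt x y :
  clos_refl_trans V E x y -> exists f n, f 0 = x /\ f n = y /\ walk f n.
Proof.
  intro Hxy. apply clos_rt_rtn1_iff in Hxy.
  induction Hxy as [| y z Eyz _ (f & n & F0 & Fn & Wf)].
  - exists (fun _ => x), 0. repeat split. intros k Hk. lia.
  - exists (fun k => if k <=? n then f k else z), (S n). repeat split.
    + exact F0.
    + rewrite (proj2 (Nat.leb_gt (S n) n)) by lia. reflexivity.
    + intros k Hk. rewrite (proj2 (Nat.leb_le k n)) by lia.
      destruct (Nat.leb_spec (S k) n).
      * apply Wf. lia.
      * replace k with n by lia. rewrite Fn. exact Eyz.
Qed.

Lemma walk_shortcut f n k l :
  walk f n -> k < l <= n -> f k = f l ->
  walk (fun m => if m <=? k then f m else f (m + (l - k))) (n - (l - k)).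
Proof.
  intros Wf Hkl Efk m Hm.
  destruct (Nat.leb_spec m k), (Nat.leb_spec (S m) k).
  - apply Wf. lia.
  - replace m with k by lia. rewrite Efk. replace (S k + (l - k)) with (S l) by lia.
    apply Wf. lia.
  - lia.
  - replace (S m + (l - k)) with (S (m + (l - k))) by lia. apply Wf. lia.
Qed.

Lemma shortest_walk x y :
  clos_refl_trans V E x y ->
  exists f n, f 0 = x /\ f n = y /\ walk f n /\
    forall k l, k < l <= n -> f k <> f l.
Proof.
  intro Hxy.
  destruct (least_nat (fun n => exists f, f 0 = x /\ f n = y /\ walk f n))
    as (n & (f & F0 & Fn & Wf) & Hmin).
  { destruct (walk_of_clos_rt _ _ Hxy) as (f & n & H). eauto. }
  exists f, n. repeat split; auto.
  intros k l Hkl Efk. apply (Hmin (n - (l - k))); [lia |].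
  exists (fun m => if m <=? k then f m else f (m + (l - k))). repeat split.
  - exact F0.
  - destruct (Nat.leb_spec (n - (l - k)) k).
    + replace (n - (l - k)) with k by lia. rewrite Efk. replace l with n by lia. exact Fn.
    + replace (n - (l - k) + (l - k)) with n by lia. exact Fn.
  - exact (walk_shortcut f n k l Wf Hkl Efk).
Qed.

Hypothesis E_sym : forall x y, E x y -> E y x.
Hypothesis E_deg2 : forall v x y z, E v x -> E v y -> E v z -> x = y \/ x = z \/ y = z.

Definition leaf (v : V) : Prop := forall x y, E v x -> E v y -> x = y.

Lemma reach_on_walk_between_leaves f n :
  leaf (f 0) -> leaf (f n) -> 0 < n -> walk f n ->
  (forall k l, k < l <= n -> f k <> f l) ->
  forall z, clos_refl_trans V E (f 0) z -> exists k, k <= n /\ f k = z.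
Proof.
  intros L0 Ln Hn Wf Inj z Hz. apply clos_rt_rtn1_iff in Hz.
  induction Hz as [| y z Eyz _ (k & Hk & <-)]; [exists 0; split; auto; lia |].
  destruct k as [| k].
  - exists 1. split; [lia |]. apply L0; [apply Wf; lia | exact Eyz].
  - destruct (Nat.eq_dec (S k) n) as [<- | Hkn].
    + exists k. split; [lia |]. apply Ln; [apply E_sym, Wf; lia | exact Eyz].
    + destruct (E_deg2 (f (S k)) (f k) (f (S (S k))) z) as [Eq | [Eq | Eq]].
      * apply E_sym, Wf. lia.
      * apply Wf. lia.
      * exact Eyz.
      * exfalso. apply (Inj k (S (S k))); [lia | exact Eq].
      * exists k. split; [lia | auto].
      * exists (S (S k)). split; [lia | auto].
Qed.

Lemma leaf_reach_endpoint t1 t2 t :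
  t1 <> t2 -> leaf t1 -> leaf t2 -> leaf t ->
  clos_refl_trans V E t1 t2 -> clos_refl_trans V E t1 t -> t = t1 \/ t = t2.
Proof.
  intros Hne L1 L2 L R12 R1.
  destruct (shortest_walk _ _ R12) as (f & n & F0 & Fn & Wf & Inj).
  assert (Hn : 0 < n) by (destruct n; [congruence | lia]).
  subst t1 t2.
  destruct (reach_on_walk_between_leaves f n L1 L2 Hn Wf Inj t R1) as ([| k] & Hk & <-);
    [left; reflexivity |].
  destruct (Nat.eq_dec (S k) n) as [<- | Hkn]; [right; reflexivity |].
  exfalso. apply (Inj k (S (S k))); [lia |].
  apply L; [apply E_sym, Wf | apply Wf]; lia.
Qed.

End DegreeTwoGraphs.

Definition ZP : Type := (Z * Z)%type.

(* [coords eps x y] is the point eps (x e1 + y ê2). *)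
Definition coords (eps x y : R) : Point := (eps * (x + y / 2), eps * (y * sqrt 3 / 2)).
Definition Lp (eps : R) (A : ZP) : Point := coords eps (IZR (fst A)) (IZR (snd A)).

(* |x e1 + y ê2|^2 *)
Definition qform (x y : Z) : Z := (x * x + x * y + y * y)%Z.
Definition adj (A B : ZP) : Prop := qform (fst B - fst A) (snd B - snd A) = 1%Z.
Definition unit_tri (A B C : ZP) : Prop := adj A B /\ adj A C /\ adj B C.
Definition tri (eps : R) (A B C : ZP) : Point -> Prop := conv3 (Lp eps A) (Lp eps B) (Lp eps C).
Definition mirror (A B C : ZP) : ZP := (fst A + fst B - fst C, snd A + snd B - snd C)%Z.
(* B rotated about A by 60 degrees *)
Definition apex (A B : ZP) : ZP :=
  (fst A - (snd B - snd A), snd A + (fst B - fst A) + (snd B - snd A))%Z.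

Lemma set_ext (A B : Point -> Prop) : set_eq A B -> A = B.
Proof.
  intro H. apply functional_extensionality. intro p. apply propositional_extensionality, H.
Qed.

Lemma in_lattice_Lp eps p : in_lattice eps p <-> exists A, p = Lp eps A.
Proof.
  split.
  - intros (a & b & H). exists (a, b). exact H.
  - intros [A ->]. exists (fst A), (snd A). reflexivity.
Qed.

Lemma coords_inj eps x y x' y' :
  0 < eps -> coords eps x y = coords eps x' y' -> x = x' /\ y = y'.
Proof.
  intros He H. injection H as H1 H2. pose proof (sqrt_lt_R0 3 ltac:(lra)).
  assert (y = y') by (apply Rmult_eq_reg_l with (eps * (sqrt 3 / 2)); nra).
  subst y'. split; [apply Rmult_eq_reg_l with eps; lra | reflexivity].
Qed.

Lemma dist_Lp eps A B : 0 < eps ->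
  dist2 (Lp eps A) (Lp eps B) = eps * sqrt (IZR (qform (fst B - fst A) (snd B - snd A))).
Proof.
  intro He. unfold dist2, Lp, coords, qform; cbn [fst snd].
  rewrite !plus_IZR, !mult_IZR, !minus_IZR.
  set (dx := IZR (fst B) - IZR (fst A)). set (dy := IZR (snd B) - IZR (snd A)).
  replace (eps * sqrt (dx * dx + dx * dy + dy * dy))
    with (sqrt (eps * eps * (dx * dx + dx * dy + dy * dy))).
  - f_equal.
    transitivity (eps * eps * (dx * dx + dx * dy + dy * dy)
                  + eps * eps * (dy * dy) / 4 * (sqrt 3 * sqrt 3 - 3)).
    + unfold dx, dy. field.
    + rewrite sqrt_sqrt by lra. ring.
  - rewrite sqrt_mult_alt, sqrt_square by nra. reflexivity.
Qed.

Lemma qform_nonneg x y : (0 <= qform x y)%Z.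
Proof. unfold qform. nia. Qed.

Lemma dist_Lp_eps eps A B : 0 < eps -> dist2 (Lp eps A) (Lp eps B) = eps <-> adj A B.
Proof.
  intro He. rewrite dist_Lp by exact He. unfold adj.
  pose proof (qform_nonneg (fst B - fst A) (snd B - snd A)) as Hq.
  set (q := qform _ _) in *.
  split; intro H.
  - assert (Hs : sqrt (IZR q) = 1) by (apply Rmult_eq_reg_l with eps; lra).
    apply eq_IZR. rewrite <- (sqrt_sqrt (IZR q)) by (apply IZR_le; exact Hq).
    rewrite Hs. ring.
  - rewrite H, sqrt_1. ring.
Qed.

Lemma adj_sym A B : adj A B -> adj B A.
Proof. unfold adj, qform. intro. nia. Qed.

Lemma adj_neq A B : adj A B -> A <> B.
Proof. intros H ->. unfold adj, qform in H. lia. Qed.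

Lemma qform_unit x y : qform x y = 1%Z ->
  (x = 1 /\ y = 0 \/ x = 0 /\ y = 1 \/ x = -1 /\ y = 1 \/
   x = -1 /\ y = 0 \/ x = 0 /\ y = -1 \/ x = 1 /\ y = -1)%Z.
Proof.
  unfold qform. intro H.
  assert (Hx : (x = -1 \/ x = 0 \/ x = 1)%Z) by nia.
  assert (Hy : (y = -1 \/ y = 0 \/ y = 1)%Z) by nia.
  destruct Hx as [-> | [-> | ->]]; destruct Hy as [-> | [-> | ->]]; lia.
Qed.

Ltac unit_cases H := apply qform_unit in H;
  destruct H as [[-> ->] | [[-> ->] | [[-> ->] | [[-> ->] | [[-> ->] | [-> ->]]]]]].

Lemma cross_unit_bound a1 a2 b1 b2 : qform a1 a2 = 1%Z -> qform b1 b2 = 1%Z ->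
  (-1 <= a1 * b2 - a2 * b1 <= 1)%Z.
Proof. intros Ha Hb. unit_cases Ha; unit_cases Hb; lia. Qed.

Lemma cross_unit_triangle a1 a2 b1 b2 :
  qform a1 a2 = 1%Z -> qform b1 b2 = 1%Z -> qform (b1 - a1) (b2 - a2) = 1%Z ->
  ((a1 * b2 - a2 * b1) * (a1 * b2 - a2 * b1) = 1)%Z.
Proof. intros Ha Hb Hab. unit_cases Ha; unit_cases Hb; cbv in Hab |- *; congruence. Qed.

Lemma unit_tri_rot A B C : unit_tri A B C -> unit_tri B C A.
Proof. intros (? & ? & ?). repeat split; auto using adj_sym. Qed.

Lemma unit_tri_swap A B C : unit_tri A B C -> unit_tri B A C.
Proof. intros (? & ? & ?). repeat split; auto using adj_sym. Qed.

Lemma mirror_swap A B C : mirror A B C = mirror B A C.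
Proof. unfold mirror. f_equal; ring. Qed.

Lemma unit_tri_mirror A B C : unit_tri A B C -> unit_tri A B (mirror A B C).
Proof.
  unfold unit_tri, adj, mirror, qform; simpl. intros (HAB & HAC & HBC).
  repeat split; [exact HAB | rewrite <- HBC | rewrite <- HAC]; ring.
Qed.

Lemma unit_tri_apex A B : adj A B -> unit_tri A B (apex A B).
Proof.
  unfold unit_tri, adj, apex, qform; simpl. intro H.
  repeat split; [exact H | rewrite <- H | rewrite <- H]; ring.
Qed.

Lemma mirror_not_adj A B C : unit_tri A B C -> ~ adj C (mirror A B C).
Proof. unfold unit_tri, adj, mirror, qform; simpl. intros (? & ? & ?) ?. nia. Qed.

Lemma mirror_neq A B C : adj A B -> C <> mirror A B C.
Proof.
  unfold adj, qform, mirror. destruct C. intros H E. injection E as E1 E2. nia.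
Qed.

Lemma conv3_swap12 a b c : conv3 a b c = conv3 b a c.
Proof.
  apply set_ext. intro p. split; intros (s & t & w & ? & ? & ? & ? & ->);
    exists t, s, w; repeat split; auto; try lra; f_equal; ring.
Qed.

Lemma conv3_swap23 a b c : conv3 a b c = conv3 a c b.
Proof.
  apply set_ext. intro p. split; intros (s & t & w & ? & ? & ? & ? & ->);
    exists s, w, t; repeat split; auto; try lra; f_equal; ring.
Qed.

Ltac tri_perm := unfold tri; first
  [ reflexivity
  | rewrite conv3_swap12; reflexivity
  | rewrite conv3_swap23; reflexivity
  | rewrite conv3_swap12, conv3_swap23; reflexivity
  | rewrite conv3_swap23, conv3_swap12; reflexivity
  | rewrite conv3_swap12, conv3_swap23, conv3_swap12; reflexivity ].

Definition orient (A B C : ZP) : Z :=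
  ((fst B - fst A) * (snd C - snd A) - (snd B - snd A) * (fst C - fst A))%Z.

(* For a unit triangle ABC (where orient A B C = ±1), [bary A B C] is the barycentric
   coordinate attached to the vertex C; [baryR A B C] is its affine extension to real
   lattice coordinates. *)
Definition bary (A B C X : ZP) : Z := (orient A B C * orient A B X)%Z.
Definition baryR (A B C : ZP) (x y : R) : R :=
  IZR (orient A B C) *
  (IZR (fst B - fst A) * (y - IZR (snd A)) - IZR (snd B - snd A) * (x - IZR (fst A))).

Definition comb (s t w : R) (a b c : Z) : R := s * IZR a + t * IZR b + w * IZR c.

Lemma orient_sq A B C : unit_tri A B C -> (orient A B C * orient A B C = 1)%Z.
Proof.
  intros (HAB & HAC & HBC). apply cross_unit_triangle; [exact HAB | exact HAC |].
  rewrite <- HBC. unfold qform. ring.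
Qed.

Lemma bary_base_l A B C : bary A B C A = 0%Z.
Proof. unfold bary, orient. ring. Qed.

Lemma bary_base_r A B C : bary A B C B = 0%Z.
Proof. unfold bary, orient. ring. Qed.

Lemma bary_apex A B C : unit_tri A B C -> bary A B C C = 1%Z.
Proof. exact (orient_sq A B C). Qed.

Lemma bary_mirror A B C : unit_tri A B C -> bary A B C (mirror A B C) = (-1)%Z.
Proof.
  intro H. replace (-1)%Z with (- (orient A B C * orient A B C))%Z
    by (rewrite orient_sq by exact H; reflexivity).
  unfold bary, orient, mirror; simpl. ring.
Qed.

Lemma bary_mirror_r A B C : unit_tri A B C -> bary C A B (mirror A B C) = 1%Z.
Proof. intro H. rewrite <- (orient_sq A B C H). unfold bary, orient, mirror; simpl. ring. Qed.

Lemma bary_sum A B C X : unit_tri A B C ->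
  (bary B C A X + bary C A B X + bary A B C X = 1)%Z.
Proof. intro H. rewrite <- (orient_sq A B C H). unfold bary, orient. ring. Qed.

Lemma bary_decomp A B C X : unit_tri A B C ->
  (fst X - fst A = bary C A B X * (fst B - fst A) + bary A B C X * (fst C - fst A))%Z /\
  (snd X - snd A = bary C A B X * (snd B - snd A) + bary A B C X * (snd C - snd A))%Z.
Proof.
  intro H. pose proof (orient_sq A B C H) as D. split.
  - transitivity (orient A B C * orient A B C * (fst X - fst A))%Z;
      [rewrite D; ring | unfold bary, orient; ring].
  - transitivity (orient A B C * orient A B C * (snd X - snd A))%Z;
      [rewrite D; ring | unfold bary, orient; ring].
Qed.

Lemma bary_inj A B C X Y : unit_tri A B C ->
  bary C A B X = bary C A B Y -> bary A B C X = bary A B C Y -> X = Y.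
Proof.
  intros H E1 E2. destruct (bary_decomp A B C X H) as [X1 X2].
  destruct (bary_decomp A B C Y H) as [Y1 Y2]. rewrite E1, E2 in X1, X2.
  destruct X, Y; simpl in *. f_equal; lia.
Qed.

Lemma bary_step A B C X Y : unit_tri A B C -> adj X Y ->
  (-1 <= bary A B C Y - bary A B C X <= 1)%Z.
Proof.
  intros H HXY. pose proof (orient_sq A B C H) as D.
  pose proof (cross_unit_bound _ _ _ _ (proj1 H) HXY) as Hc.
  replace (bary A B C Y - bary A B C X)%Z with (orient A B C *
    ((fst B - fst A) * (snd Y - snd X) - (snd B - snd A) * (fst Y - fst X)))%Z
    by (unfold bary, orient; ring).
  assert (Hpm : (orient A B C = 1 \/ orient A B C = -1)%Z) by nia.
  destruct Hpm as [-> | ->]; lia.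
Qed.

Lemma baryR_IZR A B C X : baryR A B C (IZR (fst X)) (IZR (snd X)) = IZR (bary A B C X).
Proof. unfold baryR, bary, orient. repeat rewrite ?mult_IZR, ?minus_IZR. ring. Qed.

Lemma baryR_comb P Q R A B C s t w : s + t + w = 1 ->
  baryR P Q R (comb s t w (fst A) (fst B) (fst C)) (comb s t w (snd A) (snd B) (snd C)) =
  s * IZR (bary P Q R A) + t * IZR (bary P Q R B) + w * IZR (bary P Q R C).
Proof.
  intro Hsum. rewrite <- !baryR_IZR. unfold baryR, comb.
  replace s with (1 - t - w) by lra. ring.
Qed.

Lemma baryR_own A B C s t w : unit_tri A B C -> s + t + w = 1 ->
  let x := comb s t w (fst A) (fst B) (fst C) in
  let y := comb s t w (snd A) (snd B) (snd C) in
  baryR B C A x y = s /\ baryR C A B x y = t /\ baryR A B C x y = w.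
Proof.
  intros H Hsum x y. unfold x, y. rewrite !baryR_comb by exact Hsum.
  pose proof (unit_tri_rot _ _ _ H) as H1. pose proof (unit_tri_rot _ _ _ H1) as H2.
  rewrite (bary_apex A B C), (bary_apex B C A), (bary_apex C A B) by assumption.
  rewrite !bary_base_l, !bary_base_r. repeat split; ring.
Qed.

Lemma tri_iff eps A B C p : tri eps A B C p <->
  exists s t w, 0 <= s /\ 0 <= t /\ 0 <= w /\ s + t + w = 1 /\
    p = coords eps (comb s t w (fst A) (fst B) (fst C)) (comb s t w (snd A) (snd B) (snd C)).
Proof.
  unfold tri, conv3. split; intros (s & t & w & Hs & Ht & Hw & Hsum & ->);
    exists s, t, w; repeat split; auto; unfold Lp, coords, comb; simpl; f_equal; field.
Qed.

Lemma int01_of_convex_comb (a b c : Z) s t w :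
  0 <= s -> 0 <= t -> 0 <= w -> s + t + w = 1 ->
  (-1 <= b - a <= 1)%Z -> (-1 <= c - a <= 1)%Z -> (-1 <= c - b <= 1)%Z ->
  0 < s * IZR a + t * IZR b + w * IZR c < 1 ->
  (a = 0 \/ a = 1)%Z /\ (b = 0 \/ b = 1)%Z /\ (c = 0 \/ c = 1)%Z.
Proof.
  intros Hs Ht Hw Hsum Hab Hac Hbc [Hlo Hhi].
  assert (Hnp : ~ (a <= 0 /\ b <= 0 /\ c <= 0)%Z).
  { intros (Ha & Hb & Hc). apply IZR_le in Ha, Hb, Hc. nra. }
  assert (Hge : ~ (1 <= a /\ 1 <= b /\ 1 <= c)%Z).
  { intros (Ha & Hb & Hc). apply IZR_le in Ha, Hb, Hc. nra. }
  lia.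
Qed.

Ltac unit_perm :=
  match goal with
  | H : unit_tri _ _ _ |- unit_tri _ _ _ =>
      first [ exact H | exact (unit_tri_rot _ _ _ H)
            | exact (unit_tri_rot _ _ _ (unit_tri_rot _ _ _ H))
            | exact (unit_tri_swap _ _ _ H) | exact (unit_tri_swap _ _ _ (unit_tri_rot _ _ _ H))
            | exact (unit_tri_swap _ _ _ (unit_tri_rot _ _ _ (unit_tri_rot _ _ _ H))) ]
  end.

Lemma lattice_of_bary01 I J K X : unit_tri I J K ->
  (bary J K I X = 0 \/ bary J K I X = 1)%Z -> (bary K I J X = 0 \/ bary K I J X = 1)%Z ->
  X = I \/ X = J \/ X = K \/ X = mirror I J K.
Proof.
  intros H HI HJ. pose proof (bary_sum I J K X H) as Hsum.
  assert (H2 : unit_tri K I J) by unit_perm.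
  destruct HI as [HI | HI], HJ as [HJ | HJ];
    [right; right; left | right; left | left | right; right; right];
    (apply (bary_inj I J K); [exact H | |]);
    rewrite ?bary_base_l, ?bary_base_r, ?(bary_apex I J K H), ?(bary_apex K I J H2),
      ?(bary_mirror I J K H), ?(bary_mirror_r I J K H); lia.
Qed.

Lemma lattice_of_bary01_3 I J K X : unit_tri I J K ->
  (bary J K I X = 0 \/ bary J K I X = 1)%Z -> (bary K I J X = 0 \/ bary K I J X = 1)%Z ->
  (bary I J K X = 0 \/ bary I J K X = 1)%Z -> X = I \/ X = J \/ X = K.
Proof.
  intros H HI HJ HK.
  destruct (lattice_of_bary01 I J K X H HI HJ) as [| [| [| ->]]]; auto.
  rewrite bary_mirror in HK by exact H. lia.
Qed.

Lemma segment_l a b : segment a b a.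
Proof. exists 0. split; [lra |]. destruct a. simpl. f_equal; ring. Qed.

Lemma segment_r a b : segment a b b.
Proof. exists 1. split; [lra |]. destruct b. simpl. f_equal; ring. Qed.

Lemma dist2_lerp p c d : 0 <= d ->
  dist2 p ((1 - d) * fst p + d * fst c, (1 - d) * snd p + d * snd c) = d * dist2 p c.
Proof.
  intro Hd. unfold dist2; cbn [fst snd].
  replace ((fst p - ((1 - d) * fst p + d * fst c)) ^ 2
           + (snd p - ((1 - d) * snd p + d * snd c)) ^ 2)
    with (d * d * ((fst p - fst c) ^ 2 + (snd p - snd c) ^ 2)) by ring.
  rewrite sqrt_mult_alt, sqrt_square by nra. reflexivity.
Qed.

Lemma midpoint_in_segment eps I J K :
  segment (Lp eps I) (Lp eps J)
    (coords eps (comb (/2) (/2) 0 (fst I) (fst J) (fst K))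
                (comb (/2) (/2) 0 (snd I) (snd J) (snd K))).
Proof. exists (/2). split; [lra |]. unfold Lp, coords, comb; simpl. f_equal; field. Qed.

Section LatticeGeometry.
Variable eps : R.
Hypothesis eps_pos : 0 < eps.

Lemma tri_vertex_1 A B C : tri eps A B C (Lp eps A).
Proof. exists 1, 0, 0. repeat split; try lra. destruct (Lp eps A). simpl. f_equal; ring. Qed.

Lemma tri_vertex_3 A B C : tri eps A B C (Lp eps C).
Proof. exists 0, 0, 1. repeat split; try lra. destruct (Lp eps C). simpl. f_equal; ring. Qed.

Lemma segment_in_tri P Q R : subset (segment (Lp eps P) (Lp eps Q)) (tri eps P Q R).
Proof. intros p (t & Ht & ->). exists (1 - t), t, 0. repeat split; try lra. f_equal; ring. Qed.

(* A barycentric coordinate changes by at most 1 along a lattice edge, so a unit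
   triangle cannot straddle one of its integer levels. *)
Lemma bary01_of_tri P Q R A B C x y : unit_tri P Q R -> unit_tri A B C ->
  tri eps A B C (coords eps x y) -> 0 < baryR P Q R x y < 1 ->
  (bary P Q R A = 0 \/ bary P Q R A = 1)%Z /\ (bary P Q R B = 0 \/ bary P Q R B = 1)%Z /\
  (bary P Q R C = 0 \/ bary P Q R C = 1)%Z.
Proof.
  intros HPQR (HAB & HAC & HBC) HT Hb.
  apply tri_iff in HT as (s & t & w & Hs & Ht & Hw & Hsum & E).
  apply coords_inj in E as [-> ->]; [| exact eps_pos].
  rewrite baryR_comb in Hb by exact Hsum.
  apply int01_of_convex_comb with s t w; auto; apply bary_step; assumption.
Qed.

Lemma lattice_in_tri A B C X : unit_tri A B C -> tri eps A B C (Lp eps X) ->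
  X = A \/ X = B \/ X = C.
Proof.
  intros H HT. apply tri_iff in HT as (s & t & w & Hs & Ht & Hw & Hsum & E).
  apply coords_inj in E as [E1 E2]; [| exact eps_pos].
  destruct (baryR_own A B C s t w H Hsum) as (Es & Et & Ew).
  rewrite <- E1, <- E2, baryR_IZR in Es, Et, Ew.
  assert (0 <= bary B C A X)%Z by (apply le_IZR; lra).
  assert (0 <= bary C A B X)%Z by (apply le_IZR; lra).
  assert (0 <= bary A B C X)%Z by (apply le_IZR; lra).
  pose proof (bary_sum A B C X H).
  apply lattice_of_bary01_3; auto; lia.
Qed.

Lemma lattice_in_segment P Q X : adj P Q ->
  segment (Lp eps P) (Lp eps Q) (Lp eps X) -> X = P \/ X = Q.
Proof.
  intros H HX. pose proof (unit_tri_apex P Q H) as H1.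
  pose proof (unit_tri_mirror _ _ _ H1) as H2.
  destruct (lattice_in_tri _ _ _ X H1 (segment_in_tri _ _ _ _ HX)) as [| [| ->]]; auto.
  destruct (lattice_in_tri _ _ _ _ H2 (segment_in_tri _ _ _ _ HX)) as [| [| E]]; auto.
  exfalso. exact (mirror_neq P Q (apex P Q) H E).
Qed.

Lemma third_vertex P Q R C : unit_tri P Q R -> adj P C -> adj Q C ->
  C = R \/ C = mirror P Q R.
Proof.
  intros H HP HQ. assert (H1 : unit_tri Q R P) by unit_perm.
  assert (H2 : unit_tri R P Q) by unit_perm.
  pose proof (bary_step Q R P P C H1 HP). pose proof (bary_step Q R P Q C H1 HQ).
  pose proof (bary_step R P Q P C H2 HP). pose proof (bary_step R P Q Q C H2 HQ).
  rewrite (bary_apex Q R P H1), (bary_apex R P Q H2), (bary_base_l Q R P),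
    (bary_base_r R P Q) in *.
  destruct (lattice_of_bary01 P Q R C H) as [-> | [-> | [-> | ->]]]; try lia; auto.
  - exfalso. exact (adj_neq _ _ HP eq_refl).
  - exfalso. exact (adj_neq _ _ HQ eq_refl).
Qed.

Lemma tri_inter_mirror I J K : unit_tri I J K ->
  set_eq (fun p => tri eps I J K p /\ tri eps I J (mirror I J K) p)
         (segment (Lp eps I) (Lp eps J)).
Proof.
  intros H p. split.
  - intros [T1 T2].
    apply tri_iff in T1 as (s & t & w & Hs & Ht & Hw & Hsum & ->).
    apply tri_iff in T2 as (s' & t' & w' & Hs' & Ht' & Hw' & Hsum' & E).
    apply coords_inj in E as [E1 E2]; [| exact eps_pos].
    destruct (baryR_own I J K s t w H Hsum) as (_ & _ & Ew).
    pose proof (baryR_comb I J K I J (mirror I J K) s' t' w' Hsum') as Ew'.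
    rewrite <- E1, <- E2, Ew, bary_base_l, bary_base_r, bary_mirror in Ew' by exact H.
    assert (w = 0) by lra. clear Ew'. subst w.
    exists t. split; [lra |]. unfold Lp, coords, comb; simpl.
    replace s with (1 - t) by lra. f_equal; field.
  - intro Hp. split; apply segment_in_tri; exact Hp.
Qed.

Lemma tri_with_edge A B C P Q : unit_tri A B C ->
  (P = A \/ P = B \/ P = C) -> (Q = A \/ Q = B \/ Q = C) -> P <> Q ->
  exists R, unit_tri P Q R /\ (R = A \/ R = B \/ R = C) /\ tri eps A B C = tri eps P Q R.
Proof.
  intros H HP HQ HPQ.
  destruct HP as [-> | [-> | ->]], HQ as [-> | [-> | ->]]; try congruence;
    [exists C | exists B | exists C | exists A | exists B | exists A];
    (split; [unit_perm | split; [tauto | tri_perm]]).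
Qed.

Lemma tri_with_vertex A B C X : unit_tri A B C -> (X = A \/ X = B \/ X = C) ->
  exists Y Z, unit_tri X Y Z /\ tri eps A B C = tri eps X Y Z.
Proof.
  intros H [-> | [-> | ->]]; [exists B, C | exists A, C | exists A, B];
    (split; [unit_perm | tri_perm]).
Qed.

Lemma tri_eq_mirror_of_inter P Q R A B C : unit_tri P Q R -> unit_tri A B C ->
  set_eq (fun p => tri eps P Q R p /\ tri eps A B C p) (segment (Lp eps P) (Lp eps Q)) ->
  tri eps A B C = tri eps P Q (mirror P Q R).
Proof.
  intros H HABC HE. destruct H as (HPQ & HPR & HQR).
  assert (HP : P = A \/ P = B \/ P = C)
    by (apply lattice_in_tri; [exact HABC | apply HE, segment_l]).
  assert (HQ : Q = A \/ Q = B \/ Q = C)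
    by (apply lattice_in_tri; [exact HABC | apply HE, segment_r]).
  destruct (tri_with_edge A B C P Q HABC HP HQ (adj_neq _ _ HPQ))
    as (R1 & (_ & HPR1 & HQR1) & _ & E).
  rewrite E in HE |- *.
  destruct (third_vertex P Q R R1 (conj HPQ (conj HPR HQR)) HPR1 HQR1) as [-> | ->];
    [exfalso | reflexivity].
  destruct (lattice_in_segment P Q R HPQ) as [E' | E'].
  - apply HE. split; apply tri_vertex_3.
  - exact (adj_neq _ _ HPR (eq_sym E')).
  - exact (adj_neq _ _ HQR (eq_sym E')).
Qed.

Lemma tri_containing_midpoint I J K A B C : unit_tri I J K -> unit_tri A B C ->
  tri eps A B C (coords eps (comb (/2) (/2) 0 (fst I) (fst J) (fst K))
                           (comb (/2) (/2) 0 (snd I) (snd J) (snd K))) ->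
  tri eps A B C = tri eps I J K \/ tri eps A B C = tri eps I J (mirror I J K).
Proof.
  intros H HABC HT.
  destruct (baryR_own I J K (/2) (/2) 0 H ltac:(lra)) as (EI & EJ & _).
  destruct (bary01_of_tri J K I A B C _ _ ltac:(unit_perm) HABC HT) as (IA & IB & IC);
    [rewrite EI; lra |].
  destruct (bary01_of_tri K I J A B C _ _ ltac:(unit_perm) HABC HT) as (JA & JB & JC);
    [rewrite EJ; lra |].
  pose proof (mirror_not_adj I J K H) as Hna.
  pose proof (lattice_of_bary01 I J K A H IA JA) as VA.
  pose proof (lattice_of_bary01 I J K B H IB JB) as VB.
  pose proof (lattice_of_bary01 I J K C H IC JC) as VC.
  clear - VA VB VC HABC Hna. destruct HABC as (HAB & HAC & HBC).
  destruct VA as [-> | [-> | [-> | ->]]], VB as [-> | [-> | [-> | ->]]],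
    VC as [-> | [-> | [-> | ->]]];
    first [ left; tri_perm | right; tri_perm
          | exfalso; solve [ exact (adj_neq _ _ HAB eq_refl) | exact (adj_neq _ _ HAC eq_refl)
                           | exact (adj_neq _ _ HBC eq_refl) | auto using adj_sym ] ].
Qed.

Lemma tri_eq_of_inner_point I J K A B C x y : unit_tri I J K -> unit_tri A B C ->
  tri eps A B C (coords eps x y) ->
  0 < baryR J K I x y < 1 -> 0 < baryR K I J x y < 1 -> 0 < baryR I J K x y < 1 ->
  tri eps A B C = tri eps I J K.
Proof.
  intros H HABC Hq HbI HbJ HbK.
  destruct (bary01_of_tri J K I A B C _ _ ltac:(unit_perm) HABC Hq HbI) as (IA & IB & IC).
  destruct (bary01_of_tri K I J A B C _ _ ltac:(unit_perm) HABC Hq HbJ) as (JA & JB & JC).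
  destruct (bary01_of_tri I J K A B C _ _ H HABC Hq HbK) as (KA & KB & KC).
  pose proof (lattice_of_bary01_3 I J K A H IA JA KA) as VA.
  pose proof (lattice_of_bary01_3 I J K B H IB JB KB) as VB.
  pose proof (lattice_of_bary01_3 I J K C H IC JC KC) as VC.
  clear - VA VB VC HABC. destruct HABC as (HAB & HAC & HBC).
  destruct VA as [-> | [-> | ->]], VB as [-> | [-> | ->]], VC as [-> | [-> | ->]];
    first [ tri_perm
          | exfalso; solve [ exact (adj_neq _ _ HAB eq_refl) | exact (adj_neq _ _ HAC eq_refl)
                           | exact (adj_neq _ _ HBC eq_refl) ] ].
Qed.

Lemma tri_isolated_point I J K p r : unit_tri I J K -> tri eps I J K p -> 0 < r ->
  exists q, dist2 p q < r /\
    forall A B C, unit_tri A B C -> tri eps A B C q -> tri eps A B C = tri eps I J K.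
Proof.
  intros H Hp Hr. apply tri_iff in Hp as (s & t & w & Hs & Ht & Hw & Hsum & Ep).
  set (c := coords eps (comb (/3) (/3) (/3) (fst I) (fst J) (fst K))
                       (comb (/3) (/3) (/3) (snd I) (snd J) (snd K))).
  assert (Hd : 0 <= dist2 p c) by apply sqrt_pos.
  set (d := r / (r + dist2 p c)).
  assert (Ed : d * (r + dist2 p c) = r) by (unfold d; field; lra).
  assert (Hd01 : 0 < d <= 1) by nra.
  set (s' := (1 - d) * s + d / 3). set (t' := (1 - d) * t + d / 3).
  set (w' := (1 - d) * w + d / 3).
  assert (Hsum' : s' + t' + w' = 1).
  { transitivity ((1 - d) * (s + t + w) + d); [unfold s', t', w'; field | rewrite Hsum; ring]. }
  exists (coords eps (comb s' t' w' (fst I) (fst J) (fst K))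
                     (comb s' t' w' (snd I) (snd J) (snd K))).
  split.
  - replace (coords eps _ _) with ((1 - d) * fst p + d * fst c, (1 - d) * snd p + d * snd c)
      by (rewrite Ep; unfold c, coords, comb, s', t', w'; simpl; f_equal; field).
    rewrite dist2_lerp by lra. nra.
  - intros A B C HABC Hq.
    destruct (baryR_own I J K s' t' w' H Hsum') as (EI & EJ & EK).
    assert (0 < s' /\ 0 < t' /\ 0 < w') as (Ps & Pt & Pw) by (unfold s', t', w'; nra).
    apply (tri_eq_of_inner_point I J K A B C _ _ H HABC Hq);
      [rewrite EI | rewrite EJ | rewrite EK]; lra.
Qed.

Lemma is_triangle_tri T :
  is_triangle eps T <-> exists A B C, unit_tri A B C /\ T = tri eps A B C.
Proof.
  split.
  - intros (a & b & c & La & Lb & Lc & Dab & Dbc & Dac & E).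
    apply in_lattice_Lp in La as [A ->], Lb as [B ->], Lc as [C ->].
    apply dist_Lp_eps in Dab, Dbc, Dac; try exact eps_pos.
    exists A, B, C. split; [repeat split; assumption | apply set_ext, E].
  - intros (A & B & C & (HAB & HAC & HBC) & ->).
    exists (Lp eps A), (Lp eps B), (Lp eps C).
    repeat split; try (apply in_lattice_Lp; eauto); try (apply dist_Lp_eps; assumption);
      exact (fun H => H).
Qed.

End LatticeGeometry.

Definition pm (a v : Vec3) : Prop := v = a \/ v = opp3 a.

Lemma opp3_opp3 v : opp3 (opp3 v) = v.
Proof. destruct v as [[x y] z]. simpl. f_equal; [f_equal |]; ring. Qed.

Lemma opp3_neq v : on_sphere v -> v <> opp3 v.
Proof. destruct v as [[x y] z]. simpl. intros H E. injection E as E1 E2 E3. nra. Qed.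

Lemma pm_refl a : pm a a.
Proof. left. reflexivity. Qed.

Lemma pm_opp a v : pm a v -> pm a (opp3 v).
Proof. intros [-> | ->]; [right | left]; [reflexivity | apply opp3_opp3]. Qed.

Lemma pm_sym a v : pm a v -> pm v a.
Proof. intros [-> | ->]; [left | right]; [reflexivity | symmetry; apply opp3_opp3]. Qed.

Definition four_values (eps : R) (u : Point -> Vec3) (Rg : Point -> Prop) : Prop :=
  exists k1 k2 k3 k4 : Point,
    in_lattice eps k1 /\ Rg k1 /\ in_lattice eps k2 /\ Rg k2 /\
    in_lattice eps k3 /\ Rg k3 /\ in_lattice eps k4 /\ Rg k4 /\
    u k1 <> u k2 /\ u k1 <> u k3 /\ u k1 <> u k4 /\
    u k2 <> u k3 /\ u k2 <> u k4 /\ u k3 <> u k4.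

Lemma four_values_avoid eps u Rg a b c : four_values eps u Rg ->
  exists k, in_lattice eps k /\ Rg k /\ u k <> a /\ u k <> b /\ u k <> c.
Proof.
  intros (k1 & k2 & k3 & k4 & L1 & R1 & L2 & R2 & L3 & R3 & L4 & R4 &
          D12 & D13 & D14 & D23 & D24 & D34).
  apply NNPP. intro Hno.
  assert (Hk : forall k, in_lattice eps k -> Rg k -> u k = a \/ u k = b \/ u k = c).
  { intros k Lk Rk. apply NNPP. intro Hk. apply Hno. exists k. tauto. }
  destruct (Hk k1 L1 R1) as [E1 | [E1 | E1]], (Hk k2 L2 R2) as [E2 | [E2 | E2]],
    (Hk k3 L3 R3) as [E3 | [E3 | E3]], (Hk k4 L4 R4) as [E4 | [E4 | E4]]; congruence.
Qed.

Lemma two_pairs_meet {V : Type} (x y z a b p q : V) :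
  (a = x \/ a = y \/ a = z) -> (b = x \/ b = y \/ b = z) ->
  (p = x \/ p = y \/ p = z) -> (q = x \/ q = y \/ q = z) -> a <> b -> p <> q ->
  p = a \/ p = b \/ q = a \/ q = b.
Proof.
  intros [-> | [-> | ->]] [-> | [-> | ->]] [-> | [-> | ->]] [-> | [-> | ->]] Hab Hpq;
    first [tauto | congruence].
Qed.

Section Regions.
Variables (eps : R) (u : Point -> Vec3).
Hypothesis eps_pos : 0 < eps.

Definition antipodal (X Y : ZP) : Prop := u (Lp eps X) = opp3 (u (Lp eps Y)).

Lemma antipodal_sym X Y : antipodal X Y -> antipodal Y X.
Proof. unfold antipodal. intros ->. symmetry. apply opp3_opp3. Qed.

Lemma pm_of_antipodal_l a X Y : antipodal X Y -> pm a (u (Lp eps Y)) -> pm a (u (Lp eps X)).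
Proof. unfold antipodal. intros ->. apply pm_opp. Qed.

Lemma pm_of_antipodal_r a X Y : antipodal X Y -> pm a (u (Lp eps X)) -> pm a (u (Lp eps Y)).
Proof. intro E. apply pm_of_antipodal_l, antipodal_sym, E. Qed.

Lemma neighbours_sym T T' : neighbours eps u T T' -> neighbours eps u T' T.
Proof.
  intros (HT & HT' & E & HN & HE). split; [exact HT' | split; [exact HT |]].
  exists E. split; [exact HN |]. intro p. rewrite <- (HE p). tauto.
Qed.

Lemma neighbours_edge T T' : neighbours eps u T T' ->
  exists P Q, adj P Q /\ antipodal P Q /\
    set_eq (fun p => T p /\ T' p) (segment (Lp eps P) (Lp eps Q)).
Proof.
  intros (_ & _ & E & (i & j & Li & Lj & Dij & HE & Hu) & HTE).
  apply in_lattice_Lp in Li as [P ->], Lj as [Q ->].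
  exists P, Q. split; [apply (dist_Lp_eps eps P Q eps_pos), Dij | split; [exact Hu |]].
  intro p. rewrite (HTE p). apply HE.
Qed.

Definition crosses (T' : Point -> Prop) (P Q R : ZP) : Prop :=
  antipodal P Q /\ T' = tri eps P Q (mirror P Q R).

Lemma crosses_swap T' P Q R : crosses T' P Q R -> crosses T' Q P R.
Proof.
  intros [HA ->]. split; [apply antipodal_sym, HA |]. rewrite mirror_swap. tri_perm.
Qed.

Lemma neighbours_tri_cases A B C T' : unit_tri A B C ->
  neighbours eps u (tri eps A B C) T' ->
  crosses T' A B C \/ crosses T' B C A \/ crosses T' A C B.
Proof.
  intros H HN. destruct (neighbours_edge _ _ HN) as (P & Q & HPQ & HA & HE).
  destruct HN as (_ & HT' & _).
  apply (is_triangle_tri eps eps_pos T') in HT' as (A' & B' & C' & H' & ->).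
  assert (HP : P = A \/ P = B \/ P = C)
    by (apply (lattice_in_tri eps eps_pos _ _ _ _ H), HE, segment_l).
  assert (HQ : Q = A \/ Q = B \/ Q = C)
    by (apply (lattice_in_tri eps eps_pos _ _ _ _ H), HE, segment_r).
  destruct (tri_with_edge eps A B C P Q H HP HQ (adj_neq _ _ HPQ)) as (R & HPQR & HR & E).
  rewrite E in HE.
  assert (Hc : crosses (tri eps A' B' C') P Q R)
    by (split; [exact HA | exact (tri_eq_mirror_of_inter eps eps_pos _ _ _ _ _ _ HPQR H' HE)]).
  pose proof (crosses_swap _ _ _ _ Hc).
  destruct HPQR as (NPQ & NPR & NQR). apply adj_neq in NPQ, NPR, NQR.
  destruct HP as [-> | [-> | ->]], HQ as [-> | [-> | ->]], HR as [-> | [-> | ->]];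
    first [tauto | congruence].
Qed.

Hypothesis u_sphere : forall X, on_sphere (u (Lp eps X)).

Lemma antipodal_triangle_absurd A B C : antipodal A B -> antipodal B C -> antipodal A C -> False.
Proof.
  unfold antipodal. intros E1 E2 E3. rewrite E2, opp3_opp3 in E1. rewrite E1 in E3.
  exact (opp3_neq _ (u_sphere C) E3).
Qed.

Lemma neighbours_deg2 T T1 T2 T3 :
  neighbours eps u T T1 -> neighbours eps u T T2 -> neighbours eps u T T3 ->
  T1 = T2 \/ T1 = T3 \/ T2 = T3.
Proof.
  intros N1 N2 N3. pose proof N1 as (HT & _).
  apply (is_triangle_tri eps eps_pos T) in HT as (A & B & C & H & ->).
  apply (neighbours_tri_cases A B C _ H) in N1, N2, N3. unfold crosses in *.
  destruct N1 as [[? ->] | [[? ->] | [? ->]]], N2 as [[? ->] | [[? ->] | [? ->]]],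
    N3 as [[? ->] | [[? ->] | [? ->]]];
    first [ left; reflexivity | right; left; reflexivity | right; right; reflexivity
          | exfalso; apply (antipodal_triangle_absurd A B C); assumption ].
Qed.

Lemma leaf_of_isolated X Y Z : unit_tri X Y Z -> ~ antipodal Y X -> ~ antipodal X Z ->
  leaf _ (neighbours eps u) (tri eps X Y Z).
Proof.
  intros H NYX NXZ. replace (tri eps X Y Z) with (tri eps Y X Z) by tri_perm.
  assert (H' : unit_tri Y X Z) by unit_perm.
  intros T1 T2 N1 N2.
  destruct (neighbours_tri_cases Y X Z T1 H' N1) as [[? _] | [[? _] | [_ ->]]];
    [contradiction | contradiction |].
  destruct (neighbours_tri_cases Y X Z T2 H' N2) as [[? _] | [[? _] | [_ ->]]];
    [contradiction | contradiction | reflexivity].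
Qed.

Lemma leaf_of_pm a X Y Z : unit_tri X Y Z -> ~ pm a (u (Lp eps X)) ->
  pm a (u (Lp eps Y)) -> pm a (u (Lp eps Z)) -> leaf _ (neighbours eps u) (tri eps X Y Z).
Proof.
  intros H NX PY PZ. apply leaf_of_isolated; [exact H | |]; intro E; apply NX.
  - exact (pm_of_antipodal_r a Y X E PY).
  - exact (pm_of_antipodal_l a X Z E PZ).
Qed.

Definition has_antipodal_pair (a : Vec3) (T : Point -> Prop) : Prop :=
  exists A B, A <> B /\ T (Lp eps A) /\ T (Lp eps B) /\ pm a (u (Lp eps A)) /\ antipodal A B.

Lemma has_antipodal_pair_neighbour a T T' :
  has_antipodal_pair a T -> neighbours eps u T T' -> has_antipodal_pair a T'.
Proof.
  intros (A & B & HAB & TA & TB & PA & AB) HN.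
  destruct (neighbours_edge _ _ HN) as (P & Q & HPQ & PQ & HE).
  destruct HN as (HT & _).
  apply (is_triangle_tri eps eps_pos T) in HT as (X & Y & Z & H & ->).
  assert (TP : tri eps X Y Z (Lp eps P) /\ T' (Lp eps P)) by apply HE, segment_l.
  assert (TQ : tri eps X Y Z (Lp eps Q) /\ T' (Lp eps Q)) by apply HE, segment_r.
  pose proof (pm_of_antipodal_r a A B AB PA) as PB.
  assert (PP : pm a (u (Lp eps P))).
  { destruct (two_pairs_meet X Y Z A B P Q
      (lattice_in_tri eps eps_pos _ _ _ _ H TA) (lattice_in_tri eps eps_pos _ _ _ _ H TB)
      (lattice_in_tri eps eps_pos _ _ _ _ H (proj1 TP))
      (lattice_in_tri eps eps_pos _ _ _ _ H (proj1 TQ)) HAB (adj_neq _ _ HPQ))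
      as [-> | [-> | [-> | ->]]];
      [ exact PA | exact PB
      | exact (pm_of_antipodal_l a P A PQ PA) | exact (pm_of_antipodal_l a P B PQ PB) ]. }
  exists P, Q. repeat split; [exact (adj_neq _ _ HPQ) | exact (proj2 TP) | exact (proj2 TQ)
                             | exact PP | exact PQ].
Qed.

Lemma has_antipodal_pair_reach a T T' : clos_refl_trans _ (neighbours eps u) T T' ->
  has_antipodal_pair a T -> has_antipodal_pair a T'.
Proof.
  induction 1 as [T T' HN | T | T T1 T' _ IH1 _ IH2]; auto.
  intro HT. exact (has_antipodal_pair_neighbour a T T' HT HN).
Qed.

Lemma has_antipodal_pair_pm a X Y Z : unit_tri X Y Z ->
  has_antipodal_pair a (tri eps X Y Z) -> ~ pm a (u (Lp eps X)) ->
  pm a (u (Lp eps Y)) /\ pm a (u (Lp eps Z)).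
Proof.
  intros H (A & B & HAB & TA & TB & PA & AB) NX.
  pose proof (pm_of_antipodal_r a A B AB PA) as PB.
  apply (lattice_in_tri eps eps_pos _ _ _ _ H) in TA, TB.
  destruct TA as [-> | [-> | ->]], TB as [-> | [-> | ->]]; first [contradiction | tauto].
Qed.

Lemma tri_ne_mirror I J K : unit_tri I J K -> tri eps I J K <> tri eps I J (mirror I J K).
Proof.
  intros H E. pose proof (unit_tri_mirror _ _ _ H) as (_ & HIK' & HJK').
  destruct (lattice_in_tri eps eps_pos I J K (mirror I J K) H) as [E' | [E' | E']].
  - rewrite E. apply tri_vertex_3.
  - exact (adj_neq _ _ HIK' (eq_sym E')).
  - exact (adj_neq _ _ HJK' (eq_sym E')).
  - exact (mirror_neq I J K (proj1 H) (eq_sym E')).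
Qed.

Variable S : (Point -> Prop) -> Prop.
Hypothesis S_family : pairwise_connected_family eps u S.

Lemma family_tri T : S T -> exists A B C, unit_tri A B C /\ T = tri eps A B C.
Proof. intro ST. apply (is_triangle_tri eps eps_pos T), (proj1 S_family), ST. Qed.

Lemma leaf_with_new_value a b :
  (forall T, S T -> has_antipodal_pair a T) -> four_values eps u (big_union S) ->
  exists T X, S T /\ T (Lp eps X) /\ ~ pm a (u (Lp eps X)) /\ u (Lp eps X) <> b /\
    leaf _ (neighbours eps u) T.
Proof.
  intros Carry H4.
  destruct (four_values_avoid eps u _ a (opp3 a) b H4)
    as (k & Lk & (T & ST & Tk) & Na & Na' & Nb).
  apply in_lattice_Lp in Lk as [X ->].
  assert (NX : ~ pm a (u (Lp eps X))) by (intros [E | E]; contradiction).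
  destruct (family_tri T ST) as (A & B & C & HABC & ->).
  destruct (tri_with_vertex eps A B C X HABC (lattice_in_tri eps eps_pos _ _ _ _ HABC Tk))
    as (Y & Z & HXYZ & E).
  rewrite E in ST, Tk.
  destruct (has_antipodal_pair_pm a X Y Z HXYZ (Carry _ ST) NX) as (PY & PZ).
  exists (tri eps X Y Z), X. repeat split; try assumption.
  exact (leaf_of_pm a X Y Z HXYZ NX PY PZ).
Qed.

Lemma both_sides_absurd I J K :
  unit_tri I J K -> ~ pm (u (Lp eps I)) (u (Lp eps J)) -> antipodal K I ->
  four_values eps u (big_union S) ->
  S (tri eps I J K) -> S (tri eps I J (mirror I J K)) -> False.
Proof.
  intros H NJ HK H4 S1 S2. destruct S_family as [_ Fcon].
  set (a := u (Lp eps I)) in *. set (K' := mirror I J K) in *.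
  assert (H' : unit_tri I J K') by exact (unit_tri_mirror _ _ _ H).
  assert (Carry : forall T, S T -> has_antipodal_pair a T).
  { intros T ST. apply (has_antipodal_pair_reach a (tri eps I J K)); [exact (Fcon _ _ S1 ST) |].
    exists I, K. repeat split;
      [ exact (adj_neq _ _ (proj1 (proj2 H))) | apply tri_vertex_1 | apply tri_vertex_3
      | apply pm_refl | exact (antipodal_sym _ _ HK) ]. }
  assert (PK : pm a (u (Lp eps K))) by (right; exact HK).
  assert (PK' : pm a (u (Lp eps K'))).
  { refine (proj2 (has_antipodal_pair_pm a J I K' _ _ NJ)); [unit_perm |].
    replace (tri eps J I K') with (tri eps I J K') by tri_perm. apply Carry, S2. }
  assert (Leaf : forall R, unit_tri I J R -> pm a (u (Lp eps R)) ->
                 leaf _ (neighbours eps u) (tri eps I J R)).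
  { intros R HR PR. replace (tri eps I J R) with (tri eps J I R) by tri_perm.
    apply (leaf_of_pm a); [unit_perm | exact NJ | apply pm_refl | exact PR]. }
  destruct (leaf_with_new_value a (u (Lp eps J)) Carry H4) as (T & X & ST & TX & NX & NXJ & L).
  assert (Hne : forall R, unit_tri I J R -> pm a (u (Lp eps R)) -> T <> tri eps I J R).
  { intros R HR PR ->.
    destruct (lattice_in_tri eps eps_pos I J R X HR TX) as [-> | [-> | ->]];
      [exact (NX (pm_refl _)) | contradiction | contradiction]. }
  destruct (leaf_reach_endpoint _ (neighbours eps u) neighbours_sym neighbours_deg2
              (tri eps I J K) (tri eps I J K') T (tri_ne_mirror I J K H)
              (Leaf K H PK) (Leaf K' H' PK') L (Fcon _ _ S1 S2) (Fcon _ _ S1 ST)) as [E | E].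
  - exact (Hne K H PK E).
  - exact (Hne K' H' PK' E).
Qed.

Lemma not_both_sides I J K :
  unit_tri I J K -> ~ pm (u (Lp eps I)) (u (Lp eps J)) -> four_values eps u (big_union S) ->
  S (tri eps I J K) -> ~ S (tri eps I J (mirror I J K)).
Proof.
  intros H NIJ H4 S1 S2.
  assert (HN : exists T, neighbours eps u (tri eps I J K) T).
  { pose proof (proj2 S_family _ _ S1 S2) as R12. apply clos_rt_rt1n in R12.
    inversion R12 as [E | ? T HN _]; [destruct (tri_ne_mirror I J K H E) | eauto]. }
  destruct HN as (T & HN).
  destruct (neighbours_tri_cases I J K T H HN) as [[HA _] | [[HA _] | [HA _]]].
  - exact (NIJ (pm_of_antipodal_r _ I J HA (pm_refl _))).
  - apply (both_sides_absurd J I K); [unit_perm | intro E; apply NIJ, pm_sym, E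
                                     | exact (antipodal_sym _ _ HA) | exact H4 | |].
    + replace (tri eps J I K) with (tri eps I J K) by tri_perm. exact S1.
    + rewrite <- mirror_swap. replace (tri eps J I (mirror I J K))
        with (tri eps I J (mirror I J K)) by tri_perm. exact S2.
  - exact (both_sides_absurd I J K H NIJ (antipodal_sym _ _ HA) H4 S1 S2).
Qed.

Lemma family_contains_side I J : adj I J ->
  subset (segment (Lp eps I) (Lp eps J)) (big_union S) ->
  exists K, unit_tri I J K /\ S (tri eps I J K).
Proof.
  intros HIJ Hseg. pose proof (unit_tri_apex I J HIJ) as H.
  destruct (Hseg _ (midpoint_in_segment eps I J (apex I J))) as (T & ST & Tm).
  destruct (family_tri T ST) as (A & B & C & HABC & ->).
  destruct (tri_containing_midpoint eps eps_pos I J (apex I J) A B C H HABC Tm) as [E | E];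
    rewrite E in ST.
  - exists (apex I J). auto.
  - exists (mirror I J (apex I J)). split; [apply unit_tri_mirror, H | exact ST].
Qed.

Lemma boundary_edge_of_side I J K :
  unit_tri I J K -> ~ pm (u (Lp eps I)) (u (Lp eps J)) -> four_values eps u (big_union S) ->
  S (tri eps I J K) -> boundary_edge eps u (big_union S) (segment (Lp eps I) (Lp eps J)).
Proof.
  intros H NIJ H4 S1.
  pose proof (not_both_sides I J K H NIJ H4 S1) as NS2.
  pose proof (unit_tri_mirror _ _ _ H) as H'.
  split; [split |].
  - exists (Lp eps I), (Lp eps J).
    repeat split; try (apply in_lattice_Lp; eauto); try (apply dist_Lp_eps, H; exact eps_pos).
    all: exact (fun p => p).
  - intros (i & j & Li & Lj & Dij & E & Eu).
    apply in_lattice_Lp in Li as [P ->], Lj as [Q ->].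
    apply (dist_Lp_eps eps P Q eps_pos) in Dij.
    assert (HP : P = I \/ P = J)
      by (apply (lattice_in_segment eps eps_pos I J P (proj1 H)), E, segment_l).
    assert (HQ : Q = I \/ Q = J)
      by (apply (lattice_in_segment eps eps_pos I J Q (proj1 H)), E, segment_r).
    destruct HP as [-> | ->], HQ as [-> | ->]; try exact (adj_neq _ _ Dij eq_refl); apply NIJ.
    + exact (pm_of_antipodal_r _ I J Eu (pm_refl _)).
    + exact (pm_of_antipodal_l _ J I Eu (pm_refl _)).
  - exists (tri eps I J K), (tri eps I J (mirror I J K)).
    split; [apply (is_triangle_tri eps eps_pos _); eauto |].
    split; [apply (is_triangle_tri eps eps_pos _); eauto |].
    split; [intros p Hp; exists (tri eps I J K); auto |].
    split; [| exact (tri_inter_mirror eps eps_pos I J K H)].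
    intros p Hp (r & Hr & Hball).
    destruct (tri_isolated_point eps eps_pos _ _ _ p r H' Hp Hr) as (q & Hq & Hiso).
    destruct (Hball q Hq) as (T & ST & Tq).
    destruct (family_tri T ST) as (A & B & C & HABC & ->).
    apply NS2. rewrite <- (Hiso A B C HABC Tq). exact ST.
Qed.

End Regions.

Theorem lemma5p5 (eps : R) (Omega : Point -> Prop) (u : Point -> Vec3)
  (Rg : Point -> Prop) (i j : Point) :
  0 < eps -> is_open Omega -> is_bounded Omega -> SF eps Omega u ->
  admissible_region eps u Rg ->
  (exists k1 k2 k3 k4 : Point,
      in_lattice eps k1 /\ Rg k1 /\ in_lattice eps k2 /\ Rg k2 /\
      in_lattice eps k3 /\ Rg k3 /\ in_lattice eps k4 /\ Rg k4 /\
      u k1 <> u k2 /\ u k1 <> u k3 /\ u k1 <> u k4 /\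
      u k2 <> u k3 /\ u k2 <> u k4 /\ u k3 <> u k4) ->
  in_lattice eps i -> in_lattice eps j -> dist2 i j = eps ->
  subset (segment i j) Rg ->
  u i <> u j -> u i <> opp3 (u j) ->
  boundary_edge eps u Rg (segment i j).
Proof.
  intros eps_pos _ _ Hsf (S & HS & HRg & _) H4 Hi Hj Hij Hseg Hne Hopp.
  apply set_ext in HRg. subst Rg.
  apply in_lattice_Lp in Hi as [I ->], Hj as [J ->].
  apply (dist_Lp_eps eps I J eps_pos) in Hij.
  assert (Hsph : forall X, on_sphere (u (Lp eps X)))
    by (intro X; apply Hsf, in_lattice_Lp; eauto).
  assert (NIJ : ~ pm (u (Lp eps I)) (u (Lp eps J))).
  { intros [E | E]; [congruence | apply Hopp; rewrite E; symmetry; apply opp3_opp3]. }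
  destruct (family_contains_side eps u eps_pos S HS I J Hij Hseg) as (K & H & S1).
  exact (boundary_edge_of_side eps u eps_pos Hsph S HS I J K H NIJ H4 S1).
Qed.
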